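(* Let $G$ be a group with the unique root property. Suppose that for infinitely many primes $p$ there exist a normal subgroup $H$ of index $p$ in $G$ and an automorphism of $H$ that does not extend to an automorphism of $G$. Then the abstract commensurator $\mathrm{Comm}(G)$ is not finitely generated.
   Context: A group $G$ has the unique root property if for all $x,y\in G$ and every positive integer $n$, $x^n=y^n$ implies $x=y$. The abstract commensurator $\mathrm{Comm}(G)$ is the group of equivalence classes of isomorphisms between finite-index subgroups of $G$, two such isomorphisms being equivalent if they agree on some finite-index subgroup of $G$ on which both are defined; the product of $\alpha:G_1\to G_1'$ and $\beta:G_2\to G_2'$ is $\alpha\beta:\alpha^{-1}(G_1'\cap G_2)\to\beta(G_1'\cap G_2)$. *)

From Stdlib Require List.
From mathcomp Require Import all_boot.
Set Implicit Arguments.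
Unset Strict Implicit.
Unset Printing Implicit Defensive.

Record group := Group {
  carrier :> Type;
  gmul : carrier -> carrier -> carrier;
  gone : carrier;
  ginv : carrier -> carrier;
  gmulA : forall x y z, gmul x (gmul y z) = gmul (gmul x y) z;
  gmul1g : forall x, gmul gone x = x;
  gmulg1 : forall x, gmul x gone = x;
  gmulVg : forall x, gmul (ginv x) x = gone;
  gmulgV : forall x, gmul x (ginv x) = gone
}.

Section Defs.
Variable G : group.

Local Notation "x * y" := (gmul x y).
Local Notation "x ^-1" := (ginv x).

Fixpoint gpow (x : G) (n : nat) : G :=
  match n with 0 => gone G | S m => x * gpow x m end.

Definition unique_root_property : Prop :=
  forall (x y : G) (n : nat), 0 < n -> gpow x n = gpow y n -> x = y.

Definition is_subgroup (H : G -> Prop) : Prop :=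
  H (gone G) /\ (forall x y, H x -> H y -> H (x * y)) /\ (forall x, H x -> H (x^-1)).

Definition is_normal (H : G -> Prop) : Prop :=
  is_subgroup H /\ forall g h, H h -> H (g^-1 * h * g).

(* H has index n in G: there are n left-coset representatives r 0 .. r (n-1)
   such that every g lies in exactly one coset (r i) H *)
Definition has_index (H : G -> Prop) (n : nat) : Prop :=
  exists r : nat -> G, forall g, exists! i, i < n /\ H ((r i)^-1 * g).

Definition finite_index_subgroup (H : G -> Prop) : Prop :=
  is_subgroup H /\ exists n, has_index H n.

Definition hom_on (H : G -> Prop) (f : G -> G) : Prop :=
  forall x y, H x -> H y -> f (x * y) = f x * f y.

Definition is_aut_of_sub (H : G -> Prop) (f : G -> G) : Prop :=
  (forall x, H x -> H (f x)) /\ hom_on H f /\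
  (forall x y, H x -> H y -> f x = f y -> x = y) /\
  (forall y, H y -> exists x, H x /\ f x = y).

Definition is_aut (f : G -> G) : Prop :=
  hom_on (fun _ => True) f /\ injective f /\ (forall y, exists x, f x = y).

(* Raw partial maps: a domain, a codomain, and a function (meaningful on dom). *)
Record pmap := PMap { pdom : G -> Prop; pcod : G -> Prop; pfun : G -> G }.

(* isomorphism between finite-index subgroups: an element representing a
   class of Comm(G) *)
Definition is_commensuration (a : pmap) : Prop :=
  finite_index_subgroup (pdom a) /\ finite_index_subgroup (pcod a) /\
  hom_on (pdom a) (pfun a) /\
  (forall x y, pdom a x -> pdom a y -> pfun a x = pfun a y -> x = y) /\
  (forall x, pdom a x -> pcod a (pfun a x)) /\
  (forall y, pcod a y -> exists x, pdom a x /\ pfun a x = y).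

Definition comm_equiv (a b : pmap) : Prop :=
  exists K : G -> Prop, finite_index_subgroup K /\
    (forall x, K x -> pdom a x /\ pdom b x /\ pfun a x = pfun b x).

Definition comm_id : pmap := PMap (fun _ => True) (fun _ => True) (fun x => x).

Definition comm_mul (a b : pmap) : pmap :=
  PMap (fun x => pdom a x /\ pcod a (pfun a x) /\ pdom b (pfun a x))
       (fun y => exists x, pdom a x /\ pcod a (pfun a x) /\ pdom b (pfun a x)
                           /\ pfun b (pfun a x) = y)
       (fun x => pfun b (pfun a x)).

(* the set of commensurations whose class lies in the subgroup of Comm(G)
   generated by the classes of the elements of S *)
Inductive comm_generated (S : seq pmap) : pmap -> Prop :=
  | cg_base a : List.In a S -> comm_generated S a
  | cg_one : comm_generated S comm_id
  | cg_mul a b : comm_generated S a -> comm_generated S b ->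
      comm_generated S (comm_mul a b)
  | cg_inv a b : comm_generated S a -> is_commensuration b ->
      comm_equiv (comm_mul a b) comm_id -> comm_generated S b
  | cg_equiv a b : comm_generated S a -> is_commensuration b ->
      comm_equiv a b -> comm_generated S b.

Definition comm_finitely_generated : Prop :=
  exists S : seq pmap, (forall a, List.In a S -> is_commensuration a) /\
    forall c, is_commensuration c -> comm_generated S c.

End Defs.

(** If Comm(G) were generated by finitely many commensurations, choose a prime
   p larger than the indices of all their domains and codomains.  Call a
   subgroup coprime-dense if every element has a power of exponent prime to p
   in it; subgroups of index < p are coprime-dense.  Thanks to unique
   roots, every commensuration in the generated subgroup agrees with an
   isomorphism between two coprime-dense subgroups, and this property survives
   products, inverses and the equivalence relation.  Now let H be normal of
   index p and phi in Aut(H).  Since g^p lies in H, every g factors as a*h with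
   a in the coprime-dense domain A of the isomorphism al attached to phi and h in H,
   and g = a*h |-> al a * phi h is a well-defined automorphism of G extending
   phi, unique roots again providing all the needed identities. *)
From Pilot Require Import Defs.
From mathcomp Require Import all_boot.
From mathcomp Require all_fingroup.
From mathcomp Require Import zify.
From Stdlib Require Import IndefiniteDescription Classical_Prop.
Set Implicit Arguments. Unset Strict Implicit. Unset Printing Implicit Defensive.

Module SemiregularPerm.
Import all_fingroup.
Local Open Scope group_scope.

(* Under a semiregular cyclic group every orbit has size #|<[s]>|, which
   therefore divides n. *)
Lemma semiregular_perm_iter n (s : {perm 'I_n}) (x0 : 'I_n) :
  (forall k x y, iter k s x = x -> iter k s y = y) -> iter n s x0 = x0.
Proof.
move=> s_semireg; set A := <[s]>%G.
have stab1 x : 'C_A[x | 'P] = 1.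
  apply/trivgP/subsetP => t /setIP [/cycleP [k ->] /astab1P].
  rewrite /= apermE permX => skx.
  by rewrite inE; apply/eqP/permP => y; rewrite perm1 permX (s_semireg _ _ _ skx).
have actsT : [acts A, on [set: 'I_n] | 'P] by apply/actsP => a _ x; rewrite !inE.
have dvd_n : (#|A| %| n)%N.
  rewrite -[X in (_ %| X)%N](card_ord n) -cardsT -(acts_sum_card_orbit actsT).
  rewrite (eq_bigr (fun _ => #|A|)) ?sum_nat_const ?dvdn_mull //.
  by move=> T /imsetP [x _ ->]; rewrite card_orbit stab1 indexg1.
have : s ^+ n = 1.
  by case/dvdnP: dvd_n => q Eq; rewrite [X in s ^+ X]Eq mulnC expgM expg_order expg1n.
by move/(congr1 (fun t : {perm 'I_n} => t x0)); rewrite permX perm1.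
Qed.

Lemma semiregular_iter n (f : 'I_n -> 'I_n) (x0 : 'I_n) : injective f ->
  (forall k x y, iter k f x = x -> iter k f y = y) -> iter n f x0 = x0.
Proof.
move=> finj f_semireg.
have iterE k x : iter k (perm finj) x = iter k f x.
  by elim: k x => [|k IH] x //=; rewrite IH permE.
rewrite -iterE; apply: semiregular_perm_iter => k x y.
by rewrite !iterE; apply: f_semireg.
Qed.

End SemiregularPerm.

Lemma pigeonhole_nat n (f : nat -> nat) : (forall i, f i < n) ->
  exists i j, i < j <= n /\ f i = f j.
Proof.
move=> f_lt; pose F (i : 'I_n.+1) : 'I_n := Ordinal (f_lt i).
have [/injectiveP Finj | /injectivePn [x [y neq_xy /(congr1 val) /= fxy]]] :=
  boolP (injectiveb F).
  by have := leq_card F Finj; rewrite !card_ord ltnn.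
case: (ltngtP x y) => [lt_xy | lt_yx | /val_inj eq_xy].
- by exists x, y; rewrite lt_xy -ltnS ltn_ord.
- by exists y, x; rewrite lt_yx -ltnS ltn_ord.
- by rewrite eq_xy eqxx in neq_xy.
Qed.

Section GroupFacts.
Variable G : group.
Local Notation "x * y" := (gmul x y).
Local Notation "x ^-1" := (ginv x).
Local Notation one := (gone G).
Implicit Types x y z : G.

Lemma mulgA x y z : x * (y * z) = x * y * z. Proof. exact: gmulA. Qed.
Lemma mul1g x : one * x = x. Proof. exact: gmul1g. Qed.
Lemma mulg1 x : x * one = x. Proof. exact: gmulg1. Qed.
Lemma mulVg x : x^-1 * x = one. Proof. exact: gmulVg. Qed.
Lemma mulgV x : x * x^-1 = one. Proof. exact: gmulgV. Qed.
Lemma mulKg x y : x^-1 * (x * y) = y. Proof. by rewrite mulgA mulVg mul1g. Qed.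
Lemma mulKVg x y : x * (x^-1 * y) = y. Proof. by rewrite mulgA mulgV mul1g. Qed.
Lemma mulgK x y : y * x * x^-1 = y. Proof. by rewrite -mulgA mulgV mulg1. Qed.
Lemma mulgKV x y : y * x^-1 * x = y. Proof. by rewrite -mulgA mulVg mulg1. Qed.
Lemma mulgI x y z : x * y = x * z -> y = z.
Proof. by move=> E; rewrite -(mulKg x y) E mulKg. Qed.
Lemma invg_unique x y : x * y = one -> y = x^-1.
Proof. by move=> E; apply: (@mulgI x); rewrite E mulgV. Qed.
Lemma invgK x : (x^-1)^-1 = x.
Proof. by symmetry; apply: invg_unique; rewrite mulVg. Qed.
Lemma invMg x y : (x * y)^-1 = y^-1 * x^-1.
Proof. by symmetry; apply: invg_unique; rewrite -mulgA (mulgA y) mulgV mul1g mulgV. Qed.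

Lemma gpow1 x : gpow x 1 = x. Proof. exact: mulg1. Qed.
Lemma gpowD x m n : gpow x (m + n) = gpow x m * gpow x n.
Proof. by elim: m => [|m IH]; rewrite ?mul1g //= IH mulgA. Qed.
Lemma gpowM x m n : gpow x (m * n)%N = gpow (gpow x m) n.
Proof. by elim: n => [|n IH]; rewrite ?muln0 // mulnS gpowD IH. Qed.
Lemma gpowJ x y n : gpow (y^-1 * x * y) n = y^-1 * gpow x n * y.
Proof.
elim: n => [|n IH]; first by rewrite /= mulg1 mulVg.
by rewrite /= IH -!mulgA mulKVg.
Qed.

Lemma mulg_bezout x m q : 0 < m -> coprime m q ->
  exists u v, x = gpow (gpow x m) u * (gpow (gpow x q) v)^-1.
Proof.
move=> m_gt0 co_mq; have [u v E _] := egcdnP q m_gt0.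
by exists u, v; rewrite -!gpowM mulnC E (eqP co_mq) addn1 mulnC /= mulgK.
Qed.

Lemma group_sub1 A : is_subgroup A -> A one. Proof. by case. Qed.
Lemma group_subM A x y : is_subgroup A -> A x -> A y -> A (x * y).
Proof. by case=> _ [mulA _]; apply: mulA. Qed.
Lemma group_subV A x : is_subgroup A -> A x -> A x^-1.
Proof. by case=> _ [_ invA]; apply: invA. Qed.
Lemma group_subX A x n : is_subgroup A -> A x -> A (gpow x n).
Proof.
by move=> sA Ax; elim: n => [|n IH]; [apply: group_sub1 | apply: group_subM].
Qed.

Lemma group_decomp A B x m q : is_subgroup A -> is_subgroup B -> 0 < m ->
  coprime m q -> A (gpow x m) -> B (gpow x q) -> exists a b, A a /\ B b /\ x = a * b.
Proof.
move=> sA sB m_gt0 co_mq Axm Bxq; have [u [v Ex]] := mulg_bezout x m_gt0 co_mq.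
exists (gpow (gpow x m) u), (gpow (gpow x q) v)^-1.
split; first exact: group_subX.
by split; first by apply: group_subV => //; apply: group_subX.
Qed.

Section Homomorphisms.
Variables (A : G -> Prop) (f : G -> G).
Hypotheses (sA : is_subgroup A) (f_hom : hom_on A f).

Lemma hom_on1 : f one = one.
Proof.
by apply: (@mulgI (f one)); rewrite mulg1 -f_hom ?mul1g //; apply: group_sub1.
Qed.

Lemma hom_onV x : A x -> f x^-1 = (f x)^-1.
Proof.
move=> Ax; apply: invg_unique.
by rewrite -f_hom ?mulgV ?hom_on1 //; apply: group_subV.
Qed.

Lemma hom_onX x n : A x -> f (gpow x n) = gpow (f x) n.
Proof.
move=> Ax; elim: n => [|n IH]; first exact: hom_on1.
by rewrite /= f_hom ?IH //; apply: group_subX.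
Qed.

End Homomorphisms.

Lemma subgroup_preim A B f : is_subgroup A -> is_subgroup B -> hom_on A f ->
  is_subgroup (fun x => A x /\ B (f x)).
Proof.
move=> sA sB f_hom; split; first by rewrite (hom_on1 sA f_hom); split; apply: group_sub1.
split=> [x y [Ax Bfx] [Ay Bfy] | x [Ax Bfx]].
  by split; [apply: group_subM | rewrite f_hom //; apply: group_subM].
by split; [apply: group_subV | rewrite (hom_onV sA f_hom) //; apply: group_subV].
Qed.

Lemma hom_inj_of_ker f : hom_on (fun _ => True) f ->
  (forall x, f x = one -> x = one) -> injective f.
Proof.
move=> f_hom f_ker x y fxy.
have f_inv z : f z^-1 = (f z)^-1 by apply: (hom_onV _ f_hom).
have /f_ker : f (x * y^-1) = one by rewrite f_hom // f_inv fxy mulgV.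
by move=> E; rewrite -(mulgKV y x) E mul1g.
Qed.

End GroupFacts.

Section Index.
Variable G : group.
Local Notation "x * y" := (gmul x y).
Local Notation "x ^-1" := (ginv x).
Local Notation one := (gone G).
Variables (K : G -> Prop) (n : nat).
Hypotheses (sK : is_subgroup K) (K_index : has_index K n).

Lemma coset_labelling : exists (c : G -> nat) (r : nat -> G),
  [/\ forall x, c x < n, forall i, i < n -> c (r i) = i &
      forall x y, c x = c y <-> K (x^-1 * y)].
Proof.
case: K_index => r r_cover.
have label x : {i | i < n /\ K ((r i)^-1 * x)}.
  by apply: constructive_indefinite_description; have [i [? _]] := r_cover x; exists i.
have labelE x j : j < n -> K ((r j)^-1 * x) -> sval (label x) = j.
  move=> j_lt Kj; have [i [_ uniq_i]] := r_cover x.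
  by rewrite -(uniq_i j (conj j_lt Kj)) -(uniq_i _ (proj2_sig (label x))).
exists (fun x => sval (label x)), r; split.
- by move=> x; case: (proj2_sig (label x)).
- by move=> i i_lt; apply: labelE; rewrite ?mulVg //; apply: group_sub1.
move=> x y; have [_ Kx] := proj2_sig (label x); have [_ Ky] := proj2_sig (label y).
split=> [E | Kxy].
  rewrite E in Kx; have := group_subM sK (group_subV sK Kx) Ky.
  by rewrite invMg invgK -mulgA mulKVg.
symmetry; apply: labelE; first by case: (proj2_sig (label x)).
by have := group_subM sK Kx Kxy; rewrite -mulgA mulKVg.
Qed.

Lemma index_pow_mem g : exists m, 0 < m <= n /\ K (gpow g m).
Proof.
have [c [r [c_lt _ cE]]] := coset_labelling.
have [i [j [/andP [lt_ij le_jn] /cE]]] := pigeonhole_nat (fun i => c_lt (gpow g i)).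
rewrite -(subnKC (ltnW lt_ij)) gpowD mulKg => Kgji.
by exists (j - i); rewrite subn_gt0 lt_ij (leq_trans (leq_subr _ _) le_jn).
Qed.

(* Left multiplication by [g] permutes the cosets of the normal subgroup [K]
   semiregularly, as [g^k x K = x K] iff [g^k] lies in [K]. *)
Lemma normal_index_pow g : is_normal K -> K (gpow g n).
Proof.
case=> _ K_conj; have [c [r [c_lt cr cE]]] := coset_labelling.
pose co x : 'I_n := Ordinal (c_lt x).
have coE x y : co x = co y <-> K (x^-1 * y).
  by split=> [/(congr1 val) /cE // | /cE E]; apply: val_inj.
have co_r (i : 'I_n) : co (r i) = i by apply: val_inj; apply: cr.
pose s (i : 'I_n) := co (g * r i).
have s_inj : injective s.
  move=> i j /coE; rewrite invMg -mulgA mulKg => /cE.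
  by rewrite (cr _ (ltn_ord i)) (cr _ (ltn_ord j)) => /val_inj.
have s_co x : s (co x) = co (g * x).
  by apply/coE; rewrite invMg -mulgA mulKg; apply/cE; apply: cr.
have iter_co k x : iter k s (co x) = co (gpow g k * x).
  by elim: k x => [|k IH] x /=; rewrite ?mul1g // IH s_co -mulgA.
have fixE k x : iter k s (co x) = co x <-> K (gpow g k).
  rewrite iter_co; split=> [/esym/coE /(K_conj x^-1) | /(K_conj x) Kgk].
    by rewrite invgK !mulgA mulgV mul1g mulgK.
  by symmetry; apply/coE; rewrite mulgA.
apply/(fixE n one)/SemiregularPerm.semiregular_iter => // k x y.
by rewrite -(co_r x) -(co_r y) !fixE.
Qed.

End Index.

Section CoprimeDense.
Variables (G : group) (p : nat).

Definition coprime_dense (A : G -> Prop) : Prop :=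
  forall g, exists m, 0 < m /\ coprime m p /\ A (gpow g m).

Lemma coprime_denseT : coprime_dense (fun _ => True).
Proof. by move=> g; exists 1; rewrite coprime1n. Qed.

Lemma coprime_dense_small_index A n : prime p -> is_subgroup A -> has_index A n ->
  n < p -> coprime_dense A.
Proof.
move=> p_pr sA A_index lt_np g.
have [m [/andP [m_gt0 le_mn] Agm]] := index_pow_mem sA A_index g.
exists m; split=> //; split=> //.
by rewrite coprime_sym prime_coprime // gtnNdvd // (leq_ltn_trans le_mn lt_np).
Qed.

Lemma coprime_dense_preim A B f : is_subgroup A -> hom_on A f ->
  coprime_dense A -> coprime_dense B -> coprime_dense (fun x => A x /\ B (f x)).
Proof.
move=> sA f_hom A_dense B_dense g; have [m [m_gt0 [co_m Agm]]] := A_dense g.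
have [k [k_gt0 [co_k Bk]]] := B_dense (f (gpow g m)).
exists (m * k)%N; rewrite muln_gt0 m_gt0 coprimeMl co_m gpowM; split=> //; split=> //.
by split; [apply: group_subX | rewrite (hom_onX sA f_hom)].
Qed.

Record dense_iso (A B : G -> Prop) (al be : G -> G) : Prop := DenseIso {
  dom_subgroup : is_subgroup A;
  cod_subgroup : is_subgroup B;
  iso_mapsto : forall x, A x -> B (al x);
  iso_inv_mapsto : forall y, B y -> A (be y);
  iso_K : forall x, A x -> be (al x) = x;
  iso_inv_K : forall y, B y -> al (be y) = y;
  iso_hom : hom_on A al;
  dom_dense : coprime_dense A;
  cod_dense : coprime_dense B }.

Lemma dense_iso_inv_hom A B al be : dense_iso A B al be -> hom_on B be.
Proof.
case=> sA _ alA beB alK beK al_hom _ _ y z By Bz.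
rewrite -{1}(beK y By) -{1}(beK z Bz) -al_hom ?alK //; try exact: beB.
by apply: group_subM; try exact: beB.
Qed.

Lemma dense_iso_sym A B al be : dense_iso A B al be -> dense_iso B A be al.
Proof.
move=> iso; have be_hom := dense_iso_inv_hom iso.
by case: iso => *; constructor.
Qed.

Lemma dense_isoT : dense_iso (fun _ => True) (fun _ => True) id id.
Proof. by constructor=> //; apply: coprime_denseT. Qed.

Lemma dense_iso_comp A1 B1 al1 be1 A2 B2 al2 be2 :
  dense_iso A1 B1 al1 be1 -> dense_iso A2 B2 al2 be2 ->
  dense_iso (fun x => A1 x /\ A2 (al1 x)) (fun y => B2 y /\ B1 (be2 y))
            (fun x => al2 (al1 x)) (fun y => be1 (be2 y)).
Proof.
move=> iso1 iso2; have be1_hom := dense_iso_inv_hom iso1.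
have be2_hom := dense_iso_inv_hom iso2.
case: iso1 iso2 => sA1 sB1 alA1 beB1 alK1 beK1 al1_hom A1_dense B1_dense.
case=> sA2 sB2 alA2 beB2 alK2 beK2 al2_hom A2_dense B2_dense.
constructor.
- exact: subgroup_preim.
- exact: subgroup_preim.
- by move=> x [A1x A2x]; split; [apply: alA2 | rewrite alK2 //; apply: alA1].
- by move=> y [B2y B1y]; split; [apply: beB1 | rewrite beK1 //; apply: beB2].
- by move=> x [A1x A2x]; rewrite alK2 // alK1.
- by move=> y [B2y B1y]; rewrite beK1 // beK2.
- by move=> x y [A1x A2x] [A1y A2y]; rewrite al1_hom // al2_hom.
- exact: coprime_dense_preim.
- exact: coprime_dense_preim.
Qed.

Definition dense_approx (a : Defs.pmap G) : Prop :=
  exists A B al be, dense_iso A B al be /\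
    forall x, A x -> pdom a x -> al x = pfun a x.

Lemma dense_approx_small_index a nd nc : prime p -> is_commensuration a ->
  has_index (pdom a) nd -> nd < p -> has_index (pcod a) nc -> nc < p ->
  dense_approx a.
Proof.
move=> p_pr [[s_dom _] [[s_cod _] [a_hom [a_inj [a_maps a_onto]]]]].
move=> dom_idx lt_ndp cod_idx lt_ncp.
have preimage y : {x | pcod a y -> pdom a x /\ pfun a x = y}.
  apply: constructive_indefinite_description.
  have [/a_onto [x Ex] | Ny] := classic (pcod a y); first by exists x.
  by exists y.
exists (pdom a), (pcod a), (pfun a), (fun y => sval (preimage y)); split=> //.
constructor=> //.
- by move=> y /(proj2_sig (preimage y)) [].
- move=> x Dx; have [|Dx' E] := proj2_sig (preimage (pfun a x)); first exact: a_maps.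
  exact: a_inj.
- by move=> y /(proj2_sig (preimage y)) [].
- exact: coprime_dense_small_index s_dom dom_idx lt_ndp.
- exact: coprime_dense_small_index s_cod cod_idx lt_ncp.
Qed.

End CoprimeDense.

Section DenseApprox.
Variables (G : group) (p : nat).
Hypothesis G_roots : unique_root_property G.

Lemma hom_on_eq_of_pow A B f g (x : G) m : is_subgroup A -> is_subgroup B ->
  hom_on A f -> hom_on B g -> A x -> B x -> 0 < m ->
  f (gpow x m) = g (gpow x m) -> f x = g x.
Proof.
move=> sA sB f_hom g_hom Ax Bx m_gt0.
by rewrite (hom_onX sA f_hom m Ax) (hom_onX sB g_hom m Bx); apply: G_roots.
Qed.

Lemma dense_approx_id : dense_approx p (comm_id G).
Proof.
by exists (fun _ : G => True), (fun _ => True), id, id; split; first exact: dense_isoT.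
Qed.

Lemma dense_approx_mul (a b : Defs.pmap G) : dense_approx p a -> dense_approx p b ->
  dense_approx p (comm_mul a b).
Proof.
move=> [A1 [B1 [al1 [be1 [iso1 agree1]]]]] [A2 [B2 [al2 [be2 [iso2 agree2]]]]].
do 4 eexists; split; first exact: dense_iso_comp iso1 iso2.
move=> x [A1x A2x] [dom_ax [_ dom_bax]] /=.
by rewrite agree1 // in A2x *; apply: agree2.
Qed.

Lemma dense_approx_equiv (a b : Defs.pmap G) :
  dense_approx p a -> is_commensuration b -> comm_equiv a b -> dense_approx p b.
Proof.
move=> [A [B [al [be [iso agree]]]]] [[s_domb _] [_ [b_hom _]]] [K [[sK [n K_index]] K_ab]].
exists A, B, al, be; split=> // x Ax domb_x.
have [j [/andP [j_gt0 _] Kxj]] := index_pow_mem sK K_index x.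
have [doma_xj [_ E]] := K_ab _ Kxj.
apply: (hom_on_eq_of_pow (dom_subgroup iso) s_domb (iso_hom iso) b_hom Ax domb_x j_gt0).
by rewrite -E agree //; apply: group_subX (dom_subgroup iso) Ax.
Qed.

Lemma dense_approx_inv (a b : Defs.pmap G) :
  dense_approx p a -> is_commensuration b ->
  comm_equiv (comm_mul a b) (comm_id G) -> dense_approx p b.
Proof.
move=> [A [B [al [be [iso agree]]]]] [[s_domb _] [_ [b_hom [b_inj _]]]].
move=> [K [[sK [n K_index]] K_ab]].
exists B, A, be, al; split=> [|y By domb_y]; first exact: dense_iso_sym.
(* [be] and [b] agree on the power [y ^ k] for which [b (y ^ k)] lies in [A]. *)
have [j [/andP [j_gt0 _] Kj]] := index_pow_mem sK K_index (pfun b y).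
have [m [m_gt0 [_ Ajm]]] := dom_dense iso (gpow (pfun b y) j).
rewrite -gpowM in Ajm; set k := (j * m)%N in Ajm; set z := gpow (pfun b y) k in Ajm.
have Kz : K z by rewrite /z /k gpowM; apply: group_subX.
have [[doma_z [_ domb_az]] [_ /= baz]] := K_ab _ Kz.
have byk : pfun b (gpow y k) = z := hom_onX s_domb b_hom k domb_y.
have az : pfun a z = gpow y k.
  by apply: b_inj => //; [apply: group_subX | rewrite baz byk].
have k_gt0 : 0 < k by rewrite muln_gt0 j_gt0.
apply: (hom_on_eq_of_pow (cod_subgroup iso) s_domb (dense_iso_inv_hom iso) b_hom
  By domb_y k_gt0).
by rewrite byk -az -agree // (iso_K iso).
Qed.

Lemma dense_approx_generated (S : seq (Defs.pmap G)) :
  (forall a, List.In a S -> dense_approx p a) ->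
  forall c, comm_generated S c -> dense_approx p c.
Proof.
move=> S_approx c; elim=> {c}.
- exact: S_approx.
- exact: dense_approx_id.
- by move=> a b _ ? _ ?; apply: dense_approx_mul.
- by move=> a b _ ?; apply: dense_approx_inv.
- by move=> a b _ ?; apply: dense_approx_equiv.
Qed.

End DenseApprox.

Lemma coprime_dense_normal_decomp (G : group) p (D H : G -> Prop) g :
  is_subgroup D -> coprime_dense p D -> is_normal H -> has_index H p ->
  exists a h, D a /\ H h /\ g = gmul a h.
Proof.
move=> sD D_dense H_normal H_index; have [m [m_gt0 [co_mp Dgm]]] := D_dense g.
have sH : is_subgroup H by case: H_normal.
exact: group_decomp sD sH m_gt0 co_mp Dgm (normal_index_pow sH H_index g H_normal).
Qed.

Section Extension.
Variables (G : group) (p : nat).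
Local Notation "x * y" := (gmul x y).
Local Notation "x ^-1" := (ginv x).
Hypothesis G_roots : unique_root_property G.
Variables (H : G -> Prop) (phi : G -> G).
Hypotheses (H_normal : is_normal H) (H_index : has_index H p).
Hypothesis phi_aut : is_aut_of_sub H phi.
Variables (A B : G -> Prop) (al be : G -> G).
Hypothesis iso : dense_iso p A B al be.
Hypothesis agree : forall x, A x -> H x -> al x = phi x.

Let sA := dom_subgroup iso.
Let sH : is_subgroup H. Proof. by case: H_normal. Qed.
Let phi_hom : hom_on H phi. Proof. by case: phi_aut => _ []. Qed.
Let al_hom := iso_hom iso.

Let decompose g : exists a h, A a /\ H h /\ g = a * h.
Proof. exact: coprime_dense_normal_decomp sA (dom_dense iso) H_normal H_index. Qed.

Let decomp g : {ah : G * G | A ah.1 /\ H ah.2 /\ g = ah.1 * ah.2}.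
Proof.
apply: constructive_indefinite_description.
by have [a [h [Aa [Hh E]]]] := decompose g; exists (a, h).
Qed.

Definition extension g := al (sval (decomp g)).1 * phi (sval (decomp g)).2.

Lemma extension_mulE a h : A a -> H h -> extension (a * h) = al a * phi h.
Proof.
move=> Aa Hh; rewrite /extension; case: (decomp _) => [[a' h']] /= [Aa' [Hh' E]].
have Az : A (a^-1 * a') by apply: group_subM => //; apply: group_subV.
have Hz : H (a^-1 * a').
  by rewrite -(mulgK h' a') -E mulgA mulKg; apply: group_subM => //; apply: group_subV.
have Eh : h = a^-1 * a' * h' by rewrite -mulgA -E mulKg.
by rewrite -{1}(mulKVg a a') Eh al_hom // phi_hom // (agree Az Hz) mulgA.
Qed.

Lemma extension_sub x : H x -> extension x = phi x.
Proof.
move=> Hx; have := extension_mulE (group_sub1 sA) Hx.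
by rewrite mul1g (hom_on1 sA al_hom) mul1g.
Qed.

Lemma phi_conj a h : A a -> H h -> phi (a^-1 * h * a) = (al a)^-1 * phi h * al a.
Proof.
move=> Aa Hh; have [m [m_gt0 [_ Ahm]]] := dom_dense iso h.
have Hhm := group_subX m sH Hh.
have Hconj x : H x -> H (a^-1 * x * a) by case: H_normal => _; apply.
have Aa' := group_subV sA Aa.
have Ahm' : A (a^-1 * gpow h m) by apply: group_subM.
have Aconj : A (a^-1 * gpow h m * a) by apply: group_subM.
apply: (G_roots (n:=m)) => //.
rewrite -(hom_onX sH phi_hom m (Hconj _ Hh)) gpowJ -(agree Aconj (Hconj _ Hhm)).
by rewrite !al_hom // (hom_onV sA al_hom) // (agree Ahm Hhm) (hom_onX sH phi_hom) ?gpowJ.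
Qed.

Lemma extension_hom : hom_on (fun _ => True) extension.
Proof.
move=> g1 g2 _ _.
have [a1 [h1 [Aa1 [Hh1 ->]]]] := decompose g1.
have [a2 [h2 [Aa2 [Hh2 ->]]]] := decompose g2.
have Hh1' : H (a2^-1 * h1 * a2) by case: H_normal => _; apply.
have -> : a1 * h1 * (a2 * h2) = (a1 * a2) * ((a2^-1 * h1 * a2) * h2).
  by rewrite -!mulgA mulKVg.
rewrite (extension_mulE (group_subM sA Aa1 Aa2) (group_subM sH Hh1' Hh2)).
by rewrite !extension_mulE // al_hom // phi_hom // phi_conj // -!mulgA mulKVg.
Qed.

Lemma al_phi_eq a v : A a -> H v -> al a = phi v -> a = v.
Proof.
move=> Aa Hv E; have [m [m_gt0 [_ Avm]]] := dom_dense iso v.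
apply: (G_roots (n:=m)) => //.
rewrite -(iso_K iso (group_subX m sA Aa)) -(iso_K iso Avm).
rewrite (agree Avm (group_subX m sH Hv)) (hom_onX sA al_hom m Aa).
by rewrite (hom_onX sH phi_hom m Hv) E.
Qed.

Lemma extension_inj : injective extension.
Proof.
apply: (hom_inj_of_ker extension_hom) => g.
have [a [h [Aa [Hh ->]]]] := decompose g.
rewrite extension_mulE // => E.
have Hh' := group_subV sH Hh.
suff -> : a = h^-1 by rewrite mulVg.
apply: al_phi_eq => //; rewrite (hom_onV sH phi_hom) //.
by rewrite (invg_unique E) invgK.
Qed.

Lemma extension_surj y : exists x, extension x = y.
Proof.
have [b [k [Bb [Hk ->]]]] :=
  coprime_dense_normal_decomp y (cod_subgroup iso) (cod_dense iso) H_normal H_index.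
have [_ [_ [_ /(_ k Hk) [h [Hh <-]]]]] := phi_aut.
exists (be b * h).
by rewrite extension_mulE ?(iso_inv_K iso) //; apply: (iso_inv_mapsto iso).
Qed.

End Extension.

Lemma dense_approx_extend (G : group) p (H : G -> Prop) (phi : G -> G) :
  unique_root_property G -> is_normal H -> has_index H p -> is_aut_of_sub H phi ->
  dense_approx p (PMap H H phi) ->
  exists psi, is_aut psi /\ forall x, H x -> psi x = phi x.
Proof.
move=> G_roots H_normal H_index phi_aut [A [B [al [be [iso agree]]]]].
exists (extension phi H_normal H_index iso); split=> [|x]; last exact: extension_sub.
split; first exact: extension_hom.
by split; [apply: extension_inj | apply: extension_surj].
Qed.

Lemma commensurations_index_bound (G : group) (S : seq (Defs.pmap G)) :
  (forall a, List.In a S -> is_commensuration a) ->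
  exists N, forall a, List.In a S -> exists nd nc, nd < N /\ nc < N /\
    has_index (pdom a) nd /\ has_index (pcod a) nc.
Proof.
elim: S => [|a S IH] S_comm; first by exists 0.
have [N N_bound] := IH (fun b Sb => S_comm b (or_intror Sb)).
have [[_ [nd a_dom]] [[_ [nc a_cod]] _]] := S_comm a (or_introl erefl).
exists (nd + nc + N).+1 => b [<- | Sb].
  by exists nd, nc; do 2 (split; first lia).
have [nd' [nc' [? [? ?]]]] := N_bound b Sb.
by exists nd', nc'; do 2 (split; first lia).
Qed.

Lemma aut_of_sub_commensuration (G : group) (H : G -> Prop) (phi : G -> G) :
  finite_index_subgroup H -> is_aut_of_sub H phi -> is_commensuration (PMap H H phi).
Proof. by move=> H_fi [phi_maps [phi_hom [phi_inj phi_onto]]]. Qed.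

Theorem theorem2p7 (G : group) :
  unique_root_property G ->
  (forall N : nat, exists p : nat, N <= p /\ prime p /\
     exists H : G -> Prop, is_normal H /\ has_index H p /\
       exists phi : G -> G, is_aut_of_sub H phi /\
         ~ (exists psi : G -> G, is_aut psi /\ forall x, H x -> psi x = phi x)) ->
  ~ comm_finitely_generated G.
Proof.
move=> G_roots primes_ext [S [S_comm S_gen]].
have [N N_bound] := commensurations_index_bound S_comm.
have [p [le_Np [p_prime [H [H_normal [H_index [phi [phi_aut no_ext]]]]]]]] := primes_ext N.
apply/no_ext/(dense_approx_extend G_roots H_normal H_index phi_aut).
apply: (dense_approx_generated G_roots _ (S_gen _ _)).
  move=> a Sa; have [nd [nc [lt_ndN [lt_ncN [a_dom a_cod]]]]] := N_bound a Sa.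
  apply: (dense_approx_small_index p_prime (S_comm a Sa) a_dom _ a_cod);
    exact: leq_trans le_Np.
apply: aut_of_sub_commensuration phi_aut.
by split; [case: H_normal | exists p].
Qed.
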